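(* Let $G$ be a finite group, $H\le G$ a subgroup, and $k$ a field such that the group algebra $kH$ is a separable $k$-algebra. Suppose there are elements $g'_1,\ldots,g'_r\in G$ such that $\mathrm{core}_H(G)=H^{g'_1}\cap\cdots\cap H^{g'_r}\cap H$. Then $d(Q^G_H)\le r+1$.
   Context: $H^g=g^{-1}Hg$, and $\mathrm{core}_H(G)=\bigcap_{g\in G}H^g$ is the largest normal subgroup of $G$ contained in $H$. $Q^G_H$ denotes the right $kG$-module $kG/(kH)^+kG\cong k[H\backslash G]$, the permutation module on the right cosets of $H$ in $G$, where $(kH)^+$ is the augmentation ideal of $kH$. Tensor products of $kG$-modules are over $k$ with diagonal action $(m\otimes n)g=mg\otimes ng$; $Q^{\otimes 0}=k$ the trivial module. Modules $X,Y$ are similar if each is isomorphic to a direct summand of a finite direct sum of copies of the other. The depth $d(Q)$ is the least integer $n\ge0$ such that $Q^{\otimes n}$ and $Q^{\otimes(n+1)}$ are similar $kG$-modules. *)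

From HB Require Import structures.
From mathcomp Require Import all_boot all_order all_algebra all_fingroup.
From mathcomp Require Import mxrepresentation mxtens.
Set Implicit Arguments. Unset Strict Implicit. Unset Printing Implicit Defensive.
Import GRing.Theory.
Local Open Scope ring_scope.
Local Open Scope group_scope.

Section Defs.
Variables (F : fieldType) (gT : finGroupType).

(* A (right) kG-module of k-dimension n is given, in matrix form, by
   X : gT -> 'M[F]_n, where g acts on row vectors v by v |-> v *m X g.   *)

(* The permutation module Q^G_H = k[H\G] on the right cosets of H in G:
   the basis vector of the coset Hy is sent by x to that of Hyx. *)
Definition coset_perm_mx (H G : {set gT}) (x : gT) : 'M[F]_#|rcosets H G| :=
  \matrix_(i, j)
    ((@enum_val _ (mem (rcosets H G)) i :* x
       == @enum_val _ (mem (rcosets H G)) j)%:R).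

(* Q^{(x) n}: n-th tensor power over k with diagonal action (Kronecker
   power of matrices; Q^{(x)0} is the trivial 1-dimensional module). *)
Definition tens_pow_mx n (X : gT -> 'M[F]_n) (m : nat) : gT -> 'M[F]_(n ^ m) :=
  fun x => ntensmx (X x) m.

Definition dsum_mx m n (X : gT -> 'M[F]_m) (Y : gT -> 'M[F]_n)
  : gT -> 'M[F]_(m + n) :=
  fun x => block_mx (X x) 0 0 (Y x).

Fixpoint dsumn_mx n (X : gT -> 'M[F]_n) (k : nat) : gT -> 'M[F]_(k * n) :=
  match k return gT -> 'M[F]_(k * n) with
  | 0 => fun _ => 0
  | k'.+1 => dsum_mx X (dsumn_mx X k')
  end.

Definition mod_iso (G : {set gT}) m n (X : gT -> 'M[F]_m) (Y : gT -> 'M[F]_n) :=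
  exists (f : 'M[F]_(m, n)) (f' : 'M[F]_(n, m)),
    [/\ f *m f' = (1%:M)%R, f' *m f = (1%:M)%R & forall x, x \in G -> X x *m f = f *m Y x].

Definition summand_of_sum (G : {set gT}) m n (X : gT -> 'M[F]_m) (Y : gT -> 'M[F]_n) :=
  exists (k q : nat) (W : gT -> 'M[F]_q),
    mx_repr G W /\ mod_iso G (dsum_mx X W) (dsumn_mx Y k).

Definition similar_mod (G : {set gT}) m n (X : gT -> 'M[F]_m) (Y : gT -> 'M[F]_n) :=
  summand_of_sum G X Y /\ summand_of_sum G Y X.

(* Depth d(Q) <= b: the least n with Q^{(x)n} ~ Q^{(x)(n+1)} is at most b. *)
Definition depth_le (G : {set gT}) n (Q : gT -> 'M[F]_n) (b : nat) :=
  exists m, (m <= b)%N /\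
    similar_mod G (tens_pow_mx Q m) (tens_pow_mx Q m.+1).

(* kH is a separable k-algebra: there is a separability idempotent
   e = \sum_{x,y in H} c(x,y) x (x) y in kH (x)_k kH^op, i.e. the
   multiplication kH (x) kH -> kH, a (x) b |-> ab, sends e to 1 and
   a e = e a for all a in kH (the bimodule structure being
   a (u (x) v) b = au (x) vb); by linearity it suffices to take a = h in H. *)
Definition group_alg_separable (H : {set gT}) :=
  exists c : {ffun gT * gT -> F},
    [/\ forall x y, c (x, y) != 0 -> (x \in H) && (y \in H),
        forall z, z \in H ->
          \sum_(p in setX H H | p.1 * p.2 == z) c p = ((z == 1%g)%:R)%R
      & forall h x y, h \in H -> c (h^-1 * x, y) = c (x, y * h^-1)].

End Defs.

(* For n >= 1, Q^(x)n is the permutation module on n-tuples of right cosets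
   of H.  A permutation module k[Omega] is a direct summand of a sum of copies
   of k[Delta] as soon as every z in Omega has a partner y z in Delta with
   Stab(y z) <= Stab(z) and |Stab(z)| invertible in k: the orbit sums
   K(z, y z) and K(y z, z) compose to |Stab(z)| |Stab(y z)| times the
   projection onto the orbit of z, and these projections add up to 1 over a
   transversal of the orbits.  Stabilisers of coset tuples lie in conjugates
   of H, and |H| is invertible in k because kH is separable.  For Q^(x)(r+1)
   inside Q^(x)(r+2) take y z = (H, z); conversely take the constant partner
   (Hg'_1, ..., Hg'_r, H), whose stabiliser is core_H(G), which fixes every
   tuple. *)

From HB Require Import structures.
From mathcomp Require Import all_boot all_order all_algebra all_fingroup.
From mathcomp Require Import mxrepresentation mxtens.
Set Implicit Arguments. Unset Strict Implicit. Unset Printing Implicit Defensive.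
Import GRing.Theory.
Local Open Scope ring_scope.

Lemma idempotent_mx_base (F : fieldType) n (A : 'M[F]_n) :
  A *m A = A -> row_base A *m col_base A = 1%:M.
Proof.
move=> AA; have [C' C'C] := row_fullP (col_base_full A).
have [R' RR'] := row_freeP (row_base_free A).
set C := col_base A in C'C *; set R := row_base A in RR' *.
have CR : C *m R = A := mulmx_base A.
(* R C = C' (C R) (C R) R' = C' (C R) R' = 1 *)
have CRR' : C' *m (C *m R) *m R' = 1%:M.
  by rewrite mulmxA C'C mul1mx RR'.
have : C' *m (C *m R) *m (C *m R) *m R' = 1%:M.
  by rewrite CR -(mulmxA C' A A) AA; rewrite CR in CRR'.
rewrite (mulmxA C' C R) C'C mul1mx (mulmxA R C R).
by rewrite -(mulmxA _ R R') RR' mulmx1.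
Qed.

Section Summands.
Variables (F : fieldType) (gT : finGroupType) (G : {group gT}).

Definition mx_intertwines m n (X : gT -> 'M[F]_m) (Y : gT -> 'M[F]_n)
    (f : 'M[F]_(m, n)) :=
  forall g, g \in G -> X g *m f = f *m Y g.

Lemma dsum_mx_repr m n (X : gT -> 'M[F]_m) (Y : gT -> 'M[F]_n) :
  mx_repr G X -> mx_repr G Y -> mx_repr G (dsum_mx X Y).
Proof.
move=> [X1 XM] [Y1 YM]; split=> [|x y Gx Gy].
  by rewrite /dsum_mx X1 Y1 -scalar_mx_block.
by rewrite /dsum_mx mulmx_block XM // YM // !mulmx0 !mul0mx !addr0 !add0r.
Qed.

Lemma dsumn_mx_repr n (Y : gT -> 'M[F]_n) k :
  mx_repr G Y -> mx_repr G (dsumn_mx Y k).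
Proof.
move=> reprY; elim: k => [|k IHk] /=; last exact: dsum_mx_repr.
by split=> [|x y _ _]; apply/matrixP=> [[]].
Qed.

Lemma dsumn_mx_eq_in n (Y Y' : gT -> 'M[F]_n) k :
  {in G, Y =1 Y'} -> {in G, dsumn_mx Y k =1 dsumn_mx Y' k}.
Proof.
move=> eqY x Gx; elim: k => [|k IHk] //=.
by rewrite /dsum_mx eqY // IHk.
Qed.

Lemma summand_of_sum_eq_in m n (X X' : gT -> 'M[F]_m) (Y Y' : gT -> 'M[F]_n) :
  {in G, X =1 X'} -> {in G, Y =1 Y'} ->
  summand_of_sum G X' Y' -> summand_of_sum G X Y.
Proof.
move=> eqX eqY [k [q [W [reprW [f [f' [ff' f'f homf]]]]]]].
exists k, q, W; split=> //; exists f, f'; split=> // x Gx.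
by rewrite /dsum_mx eqX // (dsumn_mx_eq_in k eqY) // homf.
Qed.

Lemma similar_mod_eq_in m n (X X' : gT -> 'M[F]_m) (Y Y' : gT -> 'M[F]_n) :
  {in G, X =1 X'} -> {in G, Y =1 Y'} ->
  similar_mod G X' Y' -> similar_mod G X Y.
Proof.
move=> eqX eqY [XY YX].
by split; [apply: summand_of_sum_eq_in XY | apply: summand_of_sum_eq_in YX].
Qed.

Section Complement.
Variables (m N : nat) (X : gT -> 'M[F]_m) (Z : gT -> 'M[F]_N).
Variables (S : 'M[F]_(m, N)) (P : 'M[F]_(N, m)).
Hypotheses (reprZ : mx_repr G Z) (SP1 : S *m P = 1%:M).
Hypotheses (homS : mx_intertwines X Z S) (homP : mx_intertwines Z X P).

(* The complement is the image of the idempotent [1 - P S], split as [C R]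
   with [R C = 1]. *)
Let A := 1%:M - P *m S.
Let R := row_base A.
Let C := col_base A.

Let AA : A *m A = A.
Proof.
by rewrite /A mulmxBl mul1mx !mulmxBr mulmx1 -!mulmxA (mulmxA S P) SP1 mul1mx
  subrr subr0.
Qed.

Let RC : R *m C = 1%:M. Proof. exact: idempotent_mx_base. Qed.
Let CR : C *m R = A. Proof. exact: mulmx_base. Qed.

Let RA : R *m A = R. Proof. by rewrite -[RHS]mul1mx -RC -mulmxA CR. Qed.
Let AC : A *m C = C. Proof. by rewrite -[RHS]mulmx1 -RC mulmxA CR. Qed.

Let SA : S *m A = 0.
Proof. by rewrite mulmxBr mulmx1 mulmxA SP1 mul1mx subrr. Qed.

Let AP : A *m P = 0.
Proof. by rewrite mulmxBl mul1mx -mulmxA SP1 mulmx1 subrr. Qed.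

Let SC : S *m C = 0. Proof. by rewrite -AC mulmxA SA mul0mx. Qed.
Let RP : R *m P = 0. Proof. by rewrite -RA -mulmxA AP mulmx0. Qed.

Let homA : mx_intertwines Z Z A.
Proof.
move=> g Gg; rewrite /A mulmxBr mulmxBl mulmx1 mul1mx mulmxA homP //.
by rewrite -mulmxA homS // mulmxA.
Qed.

Let homC g : g \in G -> C *m (R *m Z g *m C) = Z g *m C.
Proof.
move=> Gg; rewrite (mulmxA C (R *m Z g)) (mulmxA C R) CR -homA //.
by rewrite -(mulmxA (Z g) A C) AC.
Qed.

Lemma mx_repr_complement :
  exists q (W : gT -> 'M[F]_q), mx_repr G W /\ mod_iso G (dsum_mx X W) Z.
Proof.
have [Z1 ZM] := reprZ.
exists (\rank A), (fun g => R *m Z g *m C); split.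
  split=> [|x y Gx Gy]; first by rewrite Z1 mulmx1 RC.
  by rewrite ZM // -(mulmxA (R *m Z x)) homC // !mulmxA.
exists (col_mx S R), (row_mx P C); split.
- by rewrite mul_col_row SP1 SC RP RC -scalar_mx_block.
- by rewrite mul_row_col CR /A addrC subrK.
- move=> g Gg; rewrite /dsum_mx mul_block_col !mul0mx addr0 add0r mul_col_mx.
  by rewrite homS // -(mulmxA _ C R) CR -mulmxA homA // mulmxA RA.
Qed.

End Complement.

Lemma summand_of_sum_family m n (X : gT -> 'M[F]_m) (Y : gT -> 'M[F]_n)
    (I : Type) (s : seq I) (S : I -> 'M[F]_(m, n)) (P : I -> 'M[F]_(n, m)) :
    mx_repr G Y ->
    (forall i, mx_intertwines X Y (S i)) ->
    (forall i, mx_intertwines Y X (P i)) ->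
    \sum_(i <- s) S i *m P i = 1%:M ->
  summand_of_sum G X Y.
Proof.
move=> reprY homS homP sumSP.
have [S' [P' [S'P' homS' homP']]] : exists (S' : 'M[F]_(m, size s * n))
    (P' : 'M[F]_(size s * n, m)), [/\ S' *m P' = \sum_(i <- s) S i *m P i,
      mx_intertwines X (dsumn_mx Y (size s)) S'
    & mx_intertwines (dsumn_mx Y (size s)) X P'].
  elim: s {sumSP} => [|i s [S' [P' [S'P' homS' homP']]]] /=.
    exists 0, 0; rewrite big_nil mulmx0.
    by split=> // g _; rewrite mulmx0 mul0mx.
  exists (row_mx (S i) S'), (col_mx (P i) P'); split.
  - by rewrite mul_row_col S'P' big_cons.
  - move=> g Gg; rewrite /dsum_mx mul_row_block mul_mx_row !mulmx0 addr0 add0r.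
    by rewrite homS // homS'.
  - move=> g Gg; rewrite /dsum_mx mul_block_col mul_col_mx !mul0mx addr0 add0r.
    by rewrite homP // homP'.
have [q [W [reprW isoXW]]] :=
  mx_repr_complement (dsumn_mx_repr (size s) reprY) (etrans S'P' sumSP)
    homS' homP'.
by exists (size s), q, W.
Qed.

End Summands.

Lemma natr_dvdn_neq0 (R : pzSemiRingType) d m :
  (d %| m)%N -> m%:R != 0 :> R -> d%:R != 0 :> R.
Proof.
by case/dvdnP=> k ->; apply: contraNneq => d0; rewrite natrM d0 mulr0.
Qed.

Section ActionModules.
Variables (F : fieldType) (gT : finGroupType) (G : {group gT}).

Definition act_mx d (a : action G 'I_d) (g : gT) : 'M[F]_d :=
  \matrix_(i, j) (a i g == j)%:R.

Lemma mul_act_mx d p (a : action G 'I_d) g (M : 'M[F]_(d, p)) i j :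
  (act_mx a g *m M) i j = M (a i g) j.
Proof.
rewrite mxE (bigD1 (a i g)) //= mxE eqxx mul1r big1 ?addr0 // => l nl.
by rewrite mxE eq_sym (negbTE nl) mul0r.
Qed.

Lemma act_mx_repr d (a : action G 'I_d) : mx_repr G (act_mx a).
Proof.
split=> [|x y Gx Gy]; apply/matrixP=> i j; first by rewrite !mxE act1.
by rewrite mul_act_mx !mxE actMin.
Qed.

Lemma act_mx_intertwines d1 d2 (a : action G 'I_d1) (b : action G 'I_d2)
    (M : 'M[F]_(d1, d2)) :
    (forall g i j, g \in G -> M (a i g) (b j g) = M i j) ->
  mx_intertwines G (act_mx a) (act_mx b) M.
Proof.
move=> invM g Gg; apply/matrixP=> i j; rewrite mul_act_mx mxE.
rewrite (bigD1 (b j g^-1)%g) //= mxE actKVin // eqxx mulr1 big1 ?addr0.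
  by rewrite -{1}[j](actKVin b Gg) invM.
move=> l nl; rewrite mxE; case: eqP => [blj|]; last by rewrite mulr0.
by case/eqP: nl; rewrite -blj actKin.
Qed.

Section ProductAction.
Variables (d1 d2 : nat) (a : action G 'I_d1) (b : action G 'I_d2).

Definition prod_act_fun (k : 'I_(d1 * d2)) g : 'I_(d1 * d2) :=
  mxtens_index (a (mxtens_unindex k).1 g, b (mxtens_unindex k).2 g).

Lemma prod_act_fun_index i j g :
  prod_act_fun (mxtens_index (i, j)) g = mxtens_index (a i g, b j g).
Proof. by rewrite /prod_act_fun mxtens_indexK. Qed.

Lemma prod_act_is_action : is_action G prod_act_fun.
Proof.
split=> [g k l | k x y Gx Gy].
  case: (mxtens_indexP k) => i j; case: (mxtens_indexP l) => i' j'.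
  rewrite !prod_act_fun_index => /(can_inj (@mxtens_indexK _ _)).
  case=> /eqP + /eqP.
  by rewrite !(inj_eq (act_inj _ g)) => /eqP-> /eqP->.
by case: (mxtens_indexP k) => i j; rewrite !prod_act_fun_index !actMin.
Qed.

Definition prod_act := Action prod_act_is_action.

Lemma act_mx_tens g : act_mx a g *t act_mx b g = act_mx prod_act g.
Proof.
apply/matrixP=> k l.
case: (mxtens_indexP k) => i j; case: (mxtens_indexP l) => i' j'.
rewrite tensmxE !mxE /= prod_act_fun_index.
rewrite (inj_eq (can_inj (@mxtens_indexK _ _))) xpair_eqE.
by case: (_ == _); case: (_ == _); rewrite ?mulr1 ?mulr0 ?mul0r.
Qed.

Lemma astab1_prod_act i j :
  'C_G[mxtens_index (i, j) | prod_act]%g = ('C_G[i | a] :&: 'C_G[j | b])%g.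
Proof.
apply/setP=> x; rewrite !inE !sub1set !inE /= prod_act_fun_index.
rewrite (inj_eq (can_inj (@mxtens_indexK _ _))) xpair_eqE.
by case: (x \in G).
Qed.

End ProductAction.

Section OrbitSums.
Variables (d1 d2 : nat) (a : action G 'I_d1) (b : action G 'I_d2).

Definition orbit_sum_mx u v : 'M[F]_(d1, d2) :=
  \sum_(g in G) delta_mx (a u g) (b v g).

Lemma orbit_sum_mx_intertwines u v :
  mx_intertwines G (act_mx a) (act_mx b) (orbit_sum_mx u v).
Proof.
apply: act_mx_intertwines => h i j Gh.
rewrite !summxE (reindex_inj (mulIg h)) /=.
apply: eq_big => [g | g]; first by rewrite groupMr.
rewrite groupMr // => Gg; rewrite !mxE !actMin //.
by rewrite !(inj_eq (act_inj _ h)).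
Qed.

End OrbitSums.

Lemma sum_delta_orbit d (a : action G 'I_d) u :
  \sum_(g in G) (delta_mx (a u g) (a u g) : 'M[F]_d) =
    (\sum_(i in orbit a G u) delta_mx i i) *+ #|'C_G[u | a]%g|.
Proof.
rewrite -sumrMnl (partition_big (a u) (mem (orbit a G u))); last first.
  by move=> g Gg; apply: mem_orbit.
apply: eq_bigr => _ /orbitP[x Gx <-].
rewrite (eq_bigr (fun=> delta_mx (a u x) (a u x))) => [|g /andP[_ /eqP->]] //.
rewrite sumr_const; congr (_ *+ _).
by rewrite -(card_rcoset _ x) -amove_act //; apply: eq_card => g; rewrite inE.
Qed.

Lemma orbit_sum_mx_mul d1 d2 (a : action G 'I_d1) (b : action G 'I_d2) u v :
    ('C_G[v | b] \subset 'C_G[u | a])%g ->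
  orbit_sum_mx a b u v *m orbit_sum_mx b a v u =
    (\sum_(i in orbit a G u) delta_mx i i)
      *+ (#|'C_G[u | a]%g| * #|'C_G[v | b]%g|).
Proof.
move=> sCvCu; rewrite mulrnA -sum_delta_orbit mulmx_suml -sumrMnl.
apply: eq_bigr => g Gg; rewrite mulmx_sumr.
rewrite (eq_bigr (fun h => delta_mx (a u g) (a u g) *+ (b v h == b v g))).
  rewrite sumrMnr; congr (_ *+ _); rewrite -(card_rcoset _ g) -amove_act //.
  rewrite -sum1_card [RHS]big_mkcond [LHS]big_mkcond; apply: eq_bigr => h _.
  by rewrite inE; case: (h \in G); case: eqP.
move=> h Gh; rewrite mul_delta_mx_cond eq_sym.
have [bvhg | _] := eqP; last by rewrite mulr0n.
suff -> : a u h = a u g by [].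
have Cvhg : (h * g^-1)%g \in 'C_G[v | b]%g.
  rewrite !inE groupM ?groupV // sub1set inE actMin ?groupV //.
  by rewrite bvhg actKin ?eqxx.
have := subsetP sCvCu _ Cvhg.
rewrite !inE sub1set inE => /and3P[_ _ /eqP auhg].
by rewrite -[in RHS]auhg -actMin ?groupM ?groupV // mulgKV.
Qed.

Lemma sum_transversal_orbit_delta d (a : action G 'I_d) :
  \sum_(z in orbit_transversal a G setT) \sum_(i in orbit a G z)
    (delta_mx i i : 'M[F]_d) = 1%:M.
Proof.
have actsT : [acts G, on setT | a].
  by apply/subsetP=> g Gg; rewrite !inE Gg; apply/subsetP=> z; rewrite !inE.
have [/and3P[_ _ /forall_inP cardX] _ _ _] := orbit_transversalP actsT.
rewrite mx1_sum_delta (exchange_big_dep predT) //=; apply: eq_bigr => i _.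
rewrite sumr_const -[RHS]mulr1n; congr (_ *+ _).
rewrite -(eqP (cardX _ (imset_f _ (in_setT i)))); apply: eq_card => z.
by rewrite !inE orbit_in_sym.
Qed.

Lemma act_mx_summand_of_sum d1 d2 (a : action G 'I_d1) (b : action G 'I_d2)
    (y : 'I_d1 -> 'I_d2) :
    (forall z, 'C_G[y z | b] \subset 'C_G[z | a])%g ->
    (forall z, #|'C_G[z | a]%g|%:R != 0 :> F) ->
  summand_of_sum G (act_mx a) (act_mx b).
Proof.
move=> sCyC Cz_neq0.
have Cyz_neq0 z : #|'C_G[y z | b]%g|%:R != 0 :> F.
  exact: natr_dvdn_neq0 (cardSg (sCyC z)) (Cz_neq0 z).
pose w z : F := (#|'C_G[z | a]%g| * #|'C_G[y z | b]%g|)%:R^-1.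
apply: (summand_of_sum_family (act_mx_repr b)
  (s := enum (orbit_transversal a G setT))
  (S := fun z => w z *: orbit_sum_mx a b z (y z))
  (P := fun z => orbit_sum_mx b a (y z) z)).
- by move=> z g Gg; rewrite -!scalemxAl -scalemxAr orbit_sum_mx_intertwines.
- by move=> z; apply: orbit_sum_mx_intertwines.
rewrite big_enum /= -(sum_transversal_orbit_delta a); apply: eq_bigr => z _.
rewrite -scalemxAl orbit_sum_mx_mul // -scaler_nat scalerA mulVf ?scale1r //.
by rewrite natrM mulf_neq0.
Qed.

End ActionModules.

Section CosetAction.
Variables (F : fieldType) (gT : finGroupType) (G H : {group gT}).
Hypothesis sHG : H \subset G.
Local Open Scope group_scope.
Local Notation n := #|rcosets H G|.

Lemma rcosets_self : (H : {set gT}) \in rcosets H G.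
Proof. by apply/rcosetsP; exists 1; rewrite ?group1 ?rcoset1. Qed.

Definition coset_idx y : 'I_n := enum_rank_in rcosets_self (H :* y).

Lemma coset_idxK y : y \in G -> enum_val (coset_idx y) = H :* y.
Proof. by move=> Gy; rewrite enum_rankK_in //; apply/rcosetsP; exists y. Qed.

Lemma coset_idxP (i : 'I_n) : exists2 y, y \in G & i = coset_idx y.
Proof.
have /rcosetsP[y Gy Ei] := enum_valP i; exists y => //.
by apply: enum_val_inj; rewrite coset_idxK.
Qed.

Lemma eq_coset_idx y z : y \in G -> z \in G ->
  (coset_idx y == coset_idx z) = (y * z^-1 \in H).
Proof.
move=> Gy Gz; rewrite -(inj_eq enum_val_inj) !coset_idxK // -mem_rcoset.
exact/eqP/rcoset_eqP.
Qed.

(* Outside G we act trivially, so that every [coset_act_fun _ g] is a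
   permutation, as [is_action] demands. *)
Definition coset_act_fun (i : 'I_n) g : 'I_n :=
  if g \in G then enum_rank_in rcosets_self (enum_val i :* g) else i.

Lemma coset_act_fun_idx y g : y \in G -> g \in G ->
  coset_act_fun (coset_idx y) g = coset_idx (y * g).
Proof. by move=> Gy Gg; rewrite /coset_act_fun Gg coset_idxK // -rcosetM. Qed.

Lemma coset_act_is_action : is_action G coset_act_fun.
Proof.
split=> [g i j | i x g Gx Gg].
  case Gg: (g \in G); last by rewrite /coset_act_fun Gg.
  move: i j => /coset_idxP[y Gy ->] /coset_idxP[z Gz ->].
  have [Gyg Gzg] := (groupM Gy Gg, groupM Gz Gg).
  rewrite !coset_act_fun_idx // => /eqP; rewrite eq_coset_idx //.
  by rewrite invMg mulgA mulgK -eq_coset_idx // => /eqP.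
have [y Gy ->] := coset_idxP i.
by rewrite !coset_act_fun_idx ?groupM // mulgA.
Qed.

Definition coset_act := Action coset_act_is_action.

Lemma astab1_coset_act y : y \in G -> 'C_G[coset_idx y | coset_act] = H :^ y.
Proof.
move=> Gy; apply/setP=> x; rewrite !inE sub1set inE /=.
case Gx: (x \in G) => /=.
  rewrite coset_act_fun_idx // (eq_coset_idx (groupM Gy Gx) Gy).
  by rewrite mem_conjg conjgE invgK mulgA.
have sHyG : H :^ y \subset G by rewrite -(conjGid Gy) conjSg.
by apply/esym/negbTE; apply: contraFN Gx; apply: (subsetP sHyG).
Qed.

Lemma coset_perm_mx_act g :
  g \in G -> coset_perm_mx F H G g = act_mx F coset_act g.
Proof.
move=> Gg; apply/matrixP=> i j; rewrite !mxE.
have [y Gy ->] := coset_idxP i; have Gyg := groupM Gy Gg.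
rewrite /= coset_act_fun_idx // -(inj_eq enum_val_inj) !coset_idxK //.
by rewrite rcosetM.
Qed.

Fixpoint tens_coset_act k : action G 'I_(n ^ k.+1) :=
  if k is k'.+1 then prod_act coset_act (tens_coset_act k') else coset_act.

Lemma tens_pow_coset_perm_mx k :
  {in G, tens_pow_mx (coset_perm_mx F H G) k.+1 =1 act_mx F (tens_coset_act k)}.
Proof.
move=> g Gg; rewrite /tens_pow_mx /ntensmx.
elim: k => [|k IHk] /=; first exact: coset_perm_mx_act.
by rewrite IHk coset_perm_mx_act // act_mx_tens.
Qed.

Lemma tens_coset_stab_sub_conj k z :
  exists2 y, y \in G & 'C_G[z | tens_coset_act k] \subset H :^ y.
Proof.
case: k z => [|k] z /=.
  by have [y Gy ->] := coset_idxP z; exists y; rewrite ?astab1_coset_act.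
case: (mxtens_indexP z) => i j; have [y Gy ->] := coset_idxP i.
by exists y; rewrite // astab1_prod_act astab1_coset_act ?subsetIl.
Qed.

Lemma core_sub_tens_coset_stab k z :
  \bigcap_(y in G) H :^ y \subset 'C_G[z | tens_coset_act k].
Proof.
have core_sub_stab i : \bigcap_(y in G) H :^ y \subset 'C_G[i | coset_act].
  by have [y Gy ->] := coset_idxP i; rewrite astab1_coset_act // bigcap_inf.
elim: k z => [|k IHk] z //=.
case: (mxtens_indexP z) => i j.
by rewrite astab1_prod_act subsetI core_sub_stab IHk.
Qed.

Fixpoint coset_tuple k (f : nat -> gT) : 'I_(n ^ k.+1) :=
  if k is k'.+1 then mxtens_index (coset_idx (f k), coset_tuple k' f)
  else coset_idx (f 0).

Lemma astab1_coset_tuple k f : (forall i, f i \in G) ->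
  'C_G[coset_tuple k f | tens_coset_act k] = \bigcap_(i < k.+1) H :^ f i.
Proof.
move=> Gf; elim: k => [|k IHk] /=; first by rewrite big_ord1 astab1_coset_act.
by rewrite astab1_prod_act astab1_coset_act // IHk [RHS]big_ord_recr setIC.
Qed.

End CosetAction.

Lemma group_alg_separable_card_neq0 (F : fieldType) (gT : finGroupType)
    (H : {group gT}) :
  group_alg_separable F H -> #|H|%:R != 0 :> F.
Proof.
case=> c [_ sum_c inv_c]; have := sum_c 1%g (group1 H); rewrite eqxx /=.
rewrite (reindex_onto (fun h => (h^-1, h)%g) snd) /=; last first.
  by move=> [x y] /andP[_ /eqP xy1]; rewrite /= -(mulgK y x) xy1 mul1g.
rewrite (eq_bigl (fun h => h \in H)) => [|h]; last first.
  by rewrite !inE /= groupV mulVg !eqxx !andbT andbb.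
rewrite (eq_bigr (fun=> c (1, 1)%g)) => [|h Hh]; last first.
  by have := inv_c h 1%g h Hh; rewrite mulg1 mulgV.
rewrite sumr_const -(mulr_natr (c (1, 1)%g)) => c_H1; apply/eqP => H0.
by move/eqP: c_H1; rewrite H0 mulr0 eq_sym oner_eq0.
Qed.

Local Close Scope ring_scope.
Local Open Scope group_scope.

Theorem mainTheorem7 (F : fieldType) (gT : finGroupType) (G H : {group gT})
    (r : nat) (g' : 'I_r -> gT) :
  H \subset G ->
  group_alg_separable F H ->
  (forall i, g' i \in G) ->
  \bigcap_(g in G) H :^ g = (\bigcap_(i < r) H :^ g' i) :&: H ->
  depth_le G (coset_perm_mx F H G) r.+1.
Proof.
move=> sHG sepH Gg' coreE.
have stab_neq0 k z : (#|'C_G[z | tens_coset_act G H k]|%:R != 0 :> F)%R.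
  have [y _ /cardSg] := tens_coset_stab_sub_conj sHG z; rewrite cardJg.
  by move/natr_dvdn_neq0; apply; apply: group_alg_separable_card_neq0.
pose f i := oapp g' 1 (insub i).
have Gf i : f i \in G by rewrite /f; case: insub => [j|] //=; apply: Gg'.
have stab_tuple :
    'C_G[coset_tuple G H r f | tens_coset_act G H r] = \bigcap_(g in G) H :^ g.
  rewrite astab1_coset_tuple // big_ord_recr /= coreE /f insubF ?ltnn //.
  by rewrite conjsg1; congr (_ :&: _); apply: eq_bigr => i _; rewrite valK.
exists r.+1; split=> //.
apply: similar_mod_eq_in (tens_pow_coset_perm_mx F H r)
  (tens_pow_coset_perm_mx F H r.+1) _.
split.
- apply: (act_mx_summand_of_sum
    (y := fun z => mxtens_index (coset_idx G H 1, z))) => //= z.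
  by rewrite astab1_prod_act subsetIr.
- apply: (act_mx_summand_of_sum (y := fun=> coset_tuple G H r f)) => // z.
  by rewrite stab_tuple core_sub_tens_coset_stab.
Qed.
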